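(* If $G$ is a finite simple graph in which every unit sphere $S(x)$ belongs to $\mathcal{S}_2$ (a three-dimensional geometric graph without boundary), then $\chi(G)=0$.
   Context: For a vertex $x$, the unit sphere $S(x)$ is the subgraph induced by the neighbors of $x$. A graph is contractible if it is $K_1$, or, inductively, if there is a vertex $x$ such that both $S(x)$ and the subgraph induced by $V\setminus\{x\}$ are contractible. Let $\mathcal{G}_0$ be the class of graphs without edges, $\mathcal{S}_0$ those with exactly two vertices, $\mathcal{B}_0$ those with exactly one vertex. For $d\ge1$: $\mathcal{G}_d$ is the class of graphs in which every $S(x)$ lies in $\mathcal{S}_{d-1}\cup\mathcal{B}_{d-1}$, with boundary $\delta G$ induced by vertices $x$ with $S(x)\in\mathcal{B}_{d-1}$ and nonempty interior; $\mathcal{B}_d$ is the class of contractible graphs in $\mathcal{G}_d$ with boundary in $\mathcal{S}_{d-1}$; $\mathcal{S}_d$ is the class of non-contractible graphs in $\mathcal{G}_d$ such that removing any single vertex yields a graph in $\mathcal{B}_d$. The Euler characteristic is $\chi(G)=\sum_{k\ge0}(-1)^k v_k$, where $v_k$ is the number of complete subgraphs $K_{k+1}$ of $G$. *)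

From mathcomp Require Import all_boot all_algebra.
Set Implicit Arguments. Unset Strict Implicit. Unset Printing Implicit Defensive.
Import GRing.Theory Num.Theory.

(* A finite simple graph is a symmetric irreflexive relation e on a finType T.
   All graphs considered are induced subgraphs, represented by vertex sets. *)
Section Graphs.
Variables (T : finType) (e : rel T).

Definition sphere (A : {set T}) (x : T) : {set T} := [set y in A | e x y].

(* contractibility, by recursion with fuel (fuel #|A| suffices) *)
Fixpoint contr_rec (n : nat) (A : {set T}) : bool :=
  match n with
  | 0 => false
  | n'.+1 => (#|A| == 1) ||
      [exists x in A, contr_rec n' (sphere A x) && contr_rec n' (A :\ x)]
  end.
Definition contractible (A : {set T}) : bool := contr_rec #|A| A.

Definition no_edges (A : {set T}) : bool :=
  [forall x in A, forall y in A, ~~ e x y].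

(* SB d = (membership in S_d, membership in B_d) *)
Fixpoint SB (d : nat) : ({set T} -> bool) * ({set T} -> bool) :=
  match d with
  | 0 => (fun A : {set T} => no_edges A && (#|A| == 2), fun A : {set T} => no_edges A && (#|A| == 1))
  | d'.+1 =>
    let: (S', B') := SB d' in
    let G := fun A : {set T} => [forall x in A, S' (sphere A x) || B' (sphere A x)]
                      && [exists x in A, ~~ B' (sphere A x)] in
    let bd := fun A : {set T} => [set x in A | B' (sphere A x)] in
    let B := fun A : {set T} => [&& contractible A, G A & S' (bd A)] in
    (fun A : {set T} => [&& G A, ~~ contractible A & [forall x in A, B (A :\ x)]], B)
  end.

Definition inS (d : nat) (A : {set T}) : bool := (SB d).1 A.
Definition inB (d : nat) (A : {set T}) : bool := (SB d).2 A.

Definition clique (C : {set T}) : bool :=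
  [forall x in C, forall y in C, (x != y) ==> e x y].

(* v_k = number of complete subgraphs K_{k+1} of the graph induced by A *)
Definition vcount (A : {set T}) (k : nat) : nat :=
  #|[set C : {set T} | [&& C \subset A, clique C & #|C| == k.+1]]|.

Definition euler_char (A : {set T}) : int :=
  \sum_(k < #|A|) ((-1) ^+ k * (vcount A k)%:Z)%R.
End Graphs.

From mathcomp Require Import all_boot all_algebra.
From mathcomp Require Import zify.
Set Implicit Arguments. Unset Strict Implicit. Unset Printing Implicit Defensive.
Import GRing.Theory Num.Theory.

(* Write f_n(A) for the number of n-cliques of A.  Deleting a vertex x gives
   f_(n+1)(A) = f_(n+1)(A \ x) + f_n(S(x)), hence
   chi(A) = chi(A \ x) + 1 - chi(S(x)), so contractible graphs have chi = 1 and,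
   by induction on d, graphs in S_d have chi = 1 + (-1)^d and all their unit
   spheres in S_(d-1).  Double counting gives the handshake identity
   sum_x f_n(S(x)) = (n+1) f_(n+1)(A).  Applied to circles, then to 2-spheres,
   it yields f_2 = f_1 + f_4 and f_3 = 2 f_4 for G, whence
   chi(G) = f_1 - f_2 + f_3 - f_4 = 0. *)

Lemma sum_card_mem (U : finType) (A : {set U}) (P : {set {set U}}) :
  (forall C, C \in P -> C \subset A) ->
  (\sum_(x in A) #|[set C in P | x \in C]| = \sum_(C in P) #|C|)%N.
Proof.
move=> subPA.
transitivity (\sum_(x in A) \sum_(C in P) (x \in C : nat))%N.
  apply: eq_bigr => x _; rewrite -sum1_card.
  rewrite (eq_bigl (fun C => (C \in P) && (x \in C))) => [|C]; last by rewrite !inE.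
  by rewrite big_mkcondr; apply: eq_bigr => C _; case: (x \in C).
rewrite exchange_big; apply: eq_bigr => C CP.
rewrite -big_mkcondr -sum1_card; apply: eq_bigl => x.
by case xC: (x \in C); rewrite ?andbF // andbT (subsetP (subPA C CP)).
Qed.

Section CliqueCounts.
Variables (T : finType) (e : rel T).
Hypotheses (e_sym : symmetric e) (e_irr : irreflexive e).

Definition cliques (A : {set T}) (n : nat) : {set {set T}} :=
  [set C : {set T} | [&& C \subset A, clique e C & #|C| == n]].

Definition ncliques (A : {set T}) (n : nat) : nat := #|cliques A n|.

Lemma ncliques_gt_card (A : {set T}) n : #|A| < n -> ncliques A n = 0.
Proof.
move=> ltAn; apply/eqP; rewrite cards_eq0; apply/eqP/setP=> C; rewrite !inE.
apply/negbTE/and3P=> -[sCA _ /eqP cardC].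
by have := subset_leq_card sCA; rewrite cardC leqNgt ltAn.
Qed.

Lemma ncliques0 (A : {set T}) : ncliques A 0 = 1.
Proof.
rewrite /ncliques (_ : cliques A 0 = [set set0]) ?cards1 //.
apply/setP=> C; rewrite !inE cards_eq0; apply/idP/idP => [/and3P[] //|/eqP->].
by rewrite sub0set eqxx andbT; apply/forall_inP=> x; rewrite inE.
Qed.

Lemma sphere_subset (A : {set T}) x : sphere e A x \subset A :\ x.
Proof.
apply/subsetP=> y; rewrite !inE => /andP[yA exy]; rewrite yA andbT.
by apply: contraTneq exy => ->; rewrite e_irr.
Qed.

Lemma clique_sphereE (A : {set T}) x (D : {set T}) : x \in A ->
  (D \subset sphere e A x) && clique e D =
  [&& x |: D \subset A, clique e (x |: D) & x \notin D].
Proof.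
move=> xA; apply/andP/and3P => [[sDS cD]|[sxDA cxD xD]].
  have xD : x \notin D by apply/negP=> /(subsetP sDS); rewrite inE e_irr andbF.
  have exD y : y \in D -> e x y by move/(subsetP sDS); rewrite inE => /andP[].
  split=> //; rewrite ?subUset ?sub1set ?xA /=.
    by apply/subsetP=> y /(subsetP sDS); rewrite inE => /andP[].
  apply/forall_inP=> y; rewrite in_setU1 => yxD; apply/forall_inP=> z.
  rewrite in_setU1 => zxD; apply/implyP=> neq_yz.
  case/orP: yxD => [/eqP yx|yD]; case/orP: zxD => [/eqP zx|zD].
  - by rewrite yx zx eqxx in neq_yz.
  - by rewrite yx exD.
  - by rewrite zx e_sym exD.
  - by move/forall_inP: cD => /(_ y yD) /forall_inP /(_ z zD) /implyP; apply.
have adj y z : y \in x |: D -> z \in x |: D -> y != z -> e y z.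
  by move=> yxD zxD; move/forall_inP: cxD => /(_ y yxD) /forall_inP /(_ z zxD) /implyP.
split.
  apply/subsetP=> y yD; rewrite inE (subsetP sxDA) ?setU1r //=.
  by apply: adj; rewrite ?setU11 ?setU1r //; apply: contraNneq xD => ->.
apply/forall_inP=> y yD; apply/forall_inP=> z zD; apply/implyP.
by apply: adj; rewrite setU1r.
Qed.

Lemma ncliques_through (A : {set T}) x n : x \in A ->
  #|[set C in cliques A n.+1 | x \in C]| = ncliques (sphere e A x) n.
Proof.
move=> xA; rewrite /ncliques.
have cliqueU1 D : D \in cliques (sphere e A x) n ->
    [&& x |: D \subset A, clique e (x |: D) & x \notin D].
  by rewrite inE => /and3P[sDS cD _]; rewrite -clique_sphereE ?sDS.
rewrite -(@card_in_imset _ _ (fun D => x |: D) (cliques (sphere e A x) n)); last first.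
  move=> D1 D2 DS1 DS2 eqD.
  have /and3P[_ _ xD1] := cliqueU1 D1 DS1; have /and3P[_ _ xD2] := cliqueU1 D2 DS2.
  by rewrite -(setU1K xD1) -(setU1K xD2) eqD.
apply: eq_card=> C; rewrite !inE; apply/idP/imsetP.
  case/andP=> /and3P[sCA cC cardC] xC; exists (C :\ x); last by rewrite setD1K.
  have /andP[sCS cCx] : (C :\ x \subset sphere e A x) && clique e (C :\ x).
    by rewrite clique_sphereE // setD11 setD1K // sCA cC.
  by rewrite inE sCS cCx /= -eqSS -(eqP cardC) (cardsD1 x C) xC.
case=> D DS ->; have /and3P[sxDA cxD xD] := cliqueU1 D DS.
move: DS; rewrite inE => /and3P[_ _ /eqP cardD].
by rewrite sxDA cxD setU11 cardsU1 xD cardD eqxx.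
Qed.

Lemma ncliques_delete (A : {set T}) x n : x \in A ->
  ncliques A n.+1 = ncliques (A :\ x) n.+1 + ncliques (sphere e A x) n.
Proof.
move=> xA; rewrite -ncliques_through // /ncliques.
rewrite -(cardsID [set C : {set T} | x \in C] (cliques A n.+1)) addnC.
congr (_ + _); apply: eq_card => C; rewrite !inE //.
by rewrite subsetD1 -!andbA; case: (x \in C); rewrite ?andbF ?andbT.
Qed.

Lemma sum_ncliques_sphere (A : {set T}) n :
  \sum_(x in A) ncliques (sphere e A x) n = n.+1 * ncliques A n.+1.
Proof.
under eq_bigr => x xA do rewrite -ncliques_through //.
rewrite sum_card_mem => [|C]; last by rewrite inE => /and3P[].
rewrite (eq_bigr (fun _ => n.+1)) => [|C]; last by rewrite inE => /and3P[_ _ /eqP].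
by rewrite sum_nat_const mulnC.
Qed.

Lemma ncliques_eq0_spheres (A : {set T}) n :
  (forall x, x \in A -> ncliques (sphere e A x) n = 0) -> ncliques A n.+1 = 0.
Proof.
move=> S0; have := sum_ncliques_sphere A n.
by rewrite big1 // => /esym/eqP; rewrite muln_eq0 => /eqP.
Qed.

Lemma ncliques1 (A : {set T}) : ncliques A 1 = #|A|.
Proof.
have := sum_ncliques_sphere A 0; rewrite mul1n => <-.
by rewrite -sum1_card; apply: eq_bigr => x _; rewrite ncliques0.
Qed.

Lemma ncliques_no_edges (A : {set T}) n :
  no_edges e A -> 1 < n -> ncliques A n = 0.
Proof.
move=> /forall_inP noE lt1n; apply/eqP; rewrite cards_eq0; apply/eqP/setP=> C.
rewrite !inE; apply/negbTE/and3P=> -[sCA cC /eqP cardC].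
have [x [y [xC yC neq_xy]]] : exists x y, [/\ x \in C, y \in C & x != y].
  by apply/card_gt1P; rewrite cardC.
move/forall_inP: cC => /(_ x xC) /forall_inP /(_ y yC) /implyP /(_ neq_xy).
by move: (noE x (subsetP sCA x xC)) => /forall_inP /(_ y (subsetP sCA y yC)) /negbTE ->.
Qed.

Local Open Scope ring_scope.

Definition euler_trunc (m : nat) (A : {set T}) : int :=
  \sum_(0 <= k < m) (-1) ^+ k * (ncliques A k.+1)%:Z.

Lemma euler_truncE (A : {set T}) m : (#|A| <= m)%N -> euler_trunc m A = euler_char e A.
Proof.
move=> leAm; have -> : euler_char e A = euler_trunc #|A| A by rewrite /euler_trunc big_mkord.
rewrite /euler_trunc (@big_cat_nat _ _ _ #|A|) //=.
rewrite [X in _ + X]big1_seq ?addr0 // => k; rewrite mem_index_iota => /andP[_ /andP[Ak _]].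
by rewrite ncliques_gt_card ?mulr0.
Qed.

Lemma euler_char_delete (A : {set T}) x : x \in A ->
  euler_char e A = euler_char e (A :\ x) + 1 - euler_char e (sphere e A x).
Proof.
move=> xA.
have cardA : #|A| = (#|A :\ x|).+1 by rewrite (cardsD1 x A) xA.
have leSA : (#|sphere e A x| <= #|A :\ x|)%N by apply/subset_leq_card/sphere_subset.
rewrite -(euler_truncE (leqnn #|A|)) -(euler_truncE (leqnSn #|A :\ x|)).
rewrite -(euler_truncE leSA) cardA /euler_trunc.
under eq_bigr => k _ do rewrite (ncliques_delete _ xA) PoszD mulrDr.
rewrite big_split /= -addrA; congr (_ + _).
rewrite big_nat_recl // expr0 mul1r ncliques0 -sumrN; congr (_ + _).
by apply: eq_bigr => k _; rewrite exprS mulN1r mulNr.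
Qed.

Lemma contr_rec_euler n (A : {set T}) : contr_rec e n A -> euler_char e A = 1.
Proof.
elim: n A => [//|n IHn] A /= /orP[/cards1P[x ->]|/exists_inP[x xA /andP[Sx Ax]]].
  have sphere0 : sphere e [set x] x = set0.
    by apply/eqP; rewrite -subset0 -(setDv [set x]) sphere_subset.
  rewrite (euler_char_delete (set11 x)) setDv sphere0 /euler_char cards0 big_ord0.
  by rewrite add0r subr0.
by rewrite (euler_char_delete xA) (IHn _ Sx) (IHn _ Ax) addrK.
Qed.

Lemma euler_char_f4 (A : {set T}) : (forall k, (4 < k)%N -> ncliques A k = 0%N) ->
  euler_char e A =
  (ncliques A 1)%:Z - (ncliques A 2)%:Z + (ncliques A 3)%:Z - (ncliques A 4)%:Z.
Proof.
move=> f_gt4; rewrite -(euler_truncE (leq_addr 4 #|A|)) /euler_trunc.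
rewrite (@big_cat_nat _ _ _ 4) ?leq_addl //= [X in _ + X]big1_seq ?addr0; last first.
  by move=> k; rewrite mem_index_iota => /andP[_ /andP[le4k _]]; rewrite f_gt4 ?mulr0.
by rewrite !big_nat_recl // big_geq // !expr2 !exprS expr0 /=; lia.
Qed.

Lemma inS_recE d (A : {set T}) : inS e d.+1 A =
  [&& [forall x in A, inS e d (sphere e A x) || inB e d (sphere e A x)]
      && [exists x in A, ~~ inB e d (sphere e A x)],
      ~~ contractible e A & [forall x in A, inB e d.+1 (A :\ x)]].
Proof. by rewrite /inS /inB /=; case: (SB e d). Qed.

Lemma inB_euler d (A : {set T}) : inB e d A -> euler_char e A = 1.
Proof.
rewrite /inB; case: d => [/andP[_ cardA]|d] /=.
  by apply: (@contr_rec_euler 1); rewrite /= cardA.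
by case: (SB e d) => S' B' /= /andP[/contr_rec_euler].
Qed.

Lemma inS_euler d (A : {set T}) : inS e d A -> euler_char e A = 1 + (-1) ^+ d.
Proof.
elim: d A => [|d IHd] A.
  rewrite /inS /= => /andP[noE /eqP cardA]; rewrite euler_char_f4 => [|k lt4k].
    by rewrite ncliques1 cardA !ncliques_no_edges.
  by rewrite ncliques_no_edges // (ltn_trans _ lt4k).
rewrite inS_recE => /and3P[/andP[/forall_inP SB_spheres /exists_inP[x xA nBx]] _ /forall_inP BA].
have Sx : inS e d (sphere e A x).
  by move: (SB_spheres x xA); rewrite (negbTE nBx) orbF.
rewrite (euler_char_delete xA) (inB_euler (BA x xA)) (IHd _ Sx) exprS mulN1r.
by rewrite opprD addrA addrK.
Qed.

(* A sphere in B_d would give chi(A) = 1, which is never 1 + (-1)^(d+1). *)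
Lemma inS_sphere d (A : {set T}) x : inS e d.+1 A -> x \in A -> inS e d (sphere e A x).
Proof.
move=> SA xA; have := inS_euler SA; move: SA.
rewrite inS_recE => /and3P[/andP[/forall_inP SB_spheres _] _ /forall_inP BA].
case/orP: (SB_spheres x xA) => // Bx.
rewrite (euler_char_delete xA) (inB_euler (BA x xA)) (inB_euler Bx) addrK.
by rewrite -[X in X = _](addr0 1) => /addrI/eqP; rewrite eq_sym signr_eq0.
Qed.

Local Close Scope ring_scope.

Lemma inS1_ncliques (Y : {set T}) : inS e 1 Y ->
  ncliques Y 2 = #|Y| /\ (forall k, 2 < k -> ncliques Y k = 0).
Proof.
move=> SY; have noE z : z \in Y -> no_edges e (sphere e Y z).
  by move/(inS_sphere SY); rewrite /inS /= => /andP[].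
split.
  have := sum_ncliques_sphere Y 1; rewrite (eq_bigr (fun _ => 2)) => [|z /(inS_sphere SY)].
    by rewrite sum_nat_const; lia.
  by rewrite /inS /= ncliques1 => /andP[_ /eqP].
case=> [|[|[|k]]] // _; apply: ncliques_eq0_spheres => z zY.
by rewrite ncliques_no_edges ?noE.
Qed.

Lemma inS2_ncliques (X : {set T}) : inS e 2 X ->
  [/\ forall k, 3 < k -> ncliques X k = 0,
      2 * ncliques X 2 = 3 * ncliques X 3
    & 2 * ncliques X 1 = 4 + ncliques X 3].
Proof.
move=> SX; have S1 y (yX : y \in X) := inS1_ncliques (inS_sphere SX yX).
have f_gt3 k : 3 < k -> ncliques X k = 0.
  case: k => [|k] // lt2k; apply: ncliques_eq0_spheres => y yX.
  by have [_ ->] := S1 y yX.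
have f23 : 2 * ncliques X 2 = 3 * ncliques X 3.
  rewrite -(sum_ncliques_sphere X 1) -(sum_ncliques_sphere X 2).
  by apply: eq_bigr => y yX; have [-> _] := S1 y yX; rewrite ncliques1.
split=> //; have := inS_euler SX; rewrite euler_char_f4 => [|k lt4k]; last first.
  by rewrite f_gt3 // (ltn_trans _ lt4k).
by rewrite (f_gt3 4) // sqrrN expr1n; lia.
Qed.

Lemma euler_char_spheres_inS2 (A : {set T}) :
  (forall x, x \in A -> inS e 2 (sphere e A x)) -> euler_char e A = 0%R.
Proof.
move=> S2; set f := ncliques A.
have f_gt4 k : 4 < k -> f k = 0.
  case: k => [|k] // lt3k; apply: ncliques_eq0_spheres => x xA.
  by have [f_gt3 _ _] := inS2_ncliques (S2 x xA); apply: f_gt3.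
have f2 : 2 * (2 * f 2) = 4 * f 1 + 4 * f 4.
  rewrite -(sum_ncliques_sphere A 1) -(sum_ncliques_sphere A 3).
  rewrite /f ncliques1 -sum1_card !big_distrr -big_split /=.
  by apply: eq_bigr => x xA; have [_ _ ->] := inS2_ncliques (S2 x xA); rewrite muln1.
have f3 : 2 * (3 * f 3) = 3 * (4 * f 4).
  rewrite -(sum_ncliques_sphere A 2) -(sum_ncliques_sphere A 3) !big_distrr.
  by apply: eq_bigr => x xA; have [_ + _] := inS2_ncliques (S2 x xA).
by rewrite euler_char_f4 // -/f; lia.
Qed.

End CliqueCounts.

Theorem mainTheorem5 (T : finType) (e : rel T) :
  symmetric e -> irreflexive e ->
  (forall x : T, inS e 2 (sphere e [set: T] x)) ->
  euler_char e [set: T] = 0%R.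
Proof. by move=> e_sym e_irr S2; apply: euler_char_spheres_inS2 => // x _. Qed.
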